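(* Let $\mathcal A$ be an abelian category, let $M$ be an object and let $0\to F\to N\to C\to 0$ be a fully invariant short exact sequence in $\mathcal A$. Then: (1) $N$ is (strongly) $M$-$F$-split if and only if for every direct summand $M_1$ of $M$ and every direct summand $N_1$ of $N$, $N_1$ is (strongly) $M_1$-$(F\cap N_1)$-split. (2) $N$ is dual (strongly) $M$-$F$-split if and only if for every direct summand $M_1$ of $M$ and every direct summand $N_1$ of $N$, $N/N_1$ is dual (strongly) $M/M_1$-$((F+N_1)/N_1)$-split.
   Context: Convention: each statement containing parenthetical words holds in two versions: one obtained by deleting all parenthetical words and one obtained by keeping all of them. Let $\mathcal A$ be an abelian category. A morphism $s:X\to Y$ is a section if $ts=1_X$ for some $t$, and a retraction if $st=1_Y$ for some $t$. A monomorphism $i:K\to M$ is fully invariant if for every morphism $h:M\to M$ there is $\alpha:K\to K$ with $hi=i\alpha$; an epimorphism $d:M\to C$ is fully coinvariant if for every $h:M\to M$ there is $\beta:C\to C$ with $dh=\beta d$. A short exact sequence $0\to F\xrightarrow{i}N\xrightarrow{d}C\to 0$ is fully invariant if $i$ is fully invariant (equivalently $d$ is fully coinvariant). (For a direct summand $N_1$ of $N$, the inclusion $F\cap N_1\to N_1$ is fully invariant and $(F+N_1)/N_1$ is a fully invariant subobject of $N/N_1$, so the notions below apply.) For an object $M$ and a fully invariant short exact sequence $0\to F\xrightarrow{i}N\xrightarrow{d}C\to 0$: $N$ is (strongly) $M$-$F$-split if for every morphism $g:M\to N$, $\ker(dg)$ (equivalently the morphism $P\to M$ in the pullback of $i$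 along $g$) is a (fully invariant) section; $N$ is dual (strongly) $M$-$F$-split if for every morphism $g:N\to M$, $\mathrm{coker}(gi)$ (equivalently the morphism $M\to Q$ in the pushout of $d$ along $g$) is a (fully coinvariant) retraction. *)

Set Implicit Arguments.

Record AbCat := {
  Ob : Type;
  Hom : Ob -> Ob -> Type;
  idm : forall A : Ob, Hom A A;
  comp : forall A B C : Ob, Hom B C -> Hom A B -> Hom A C;  (* comp g f = g o f *)
  zerom : forall A B : Ob, Hom A B;
  addm : forall A B : Ob, Hom A B -> Hom A B -> Hom A B;
  oppm : forall A B : Ob, Hom A B -> Hom A B;
  compA : forall A B C D (h : Hom C D) (g : Hom B C) (f : Hom A B),
      comp h (comp g f) = comp (comp h g) f;
  comp1m : forall A B (f : Hom A B), comp (idm B) f = f;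
  compm1 : forall A B (f : Hom A B), comp f (idm A) = f;
  addmA : forall A B (f g h : Hom A B), addm f (addm g h) = addm (addm f g) h;
  addmC : forall A B (f g : Hom A B), addm f g = addm g f;
  add0m : forall A B (f : Hom A B), addm (zerom A B) f = f;
  addNm : forall A B (f : Hom A B), addm (oppm f) f = zerom A B;
  compDl : forall A B C (g1 g2 : Hom B C) (f : Hom A B),
      comp (addm g1 g2) f = addm (comp g1 f) (comp g2 f);
  compDr : forall A B C (g : Hom B C) (f1 f2 : Hom A B),
      comp g (addm f1 f2) = addm (comp g f1) (comp g f2);
  has_zero_object : exists Z : Ob,
      (forall A (f g : Hom A Z), f = g) /\ (forall A (f g : Hom Z A), f = g);
  has_biproducts : forall A B : Ob, exists (P : Ob) (i1 : Hom A P) (i2 : Hom B P)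
      (p1 : Hom P A) (p2 : Hom P B),
      comp p1 i1 = idm A /\ comp p2 i2 = idm B /\
      comp p1 i2 = zerom B A /\ comp p2 i1 = zerom A B /\
      addm (comp i1 p1) (comp i2 p2) = idm P;
  has_kernels : forall A B (f : Hom A B), exists (K : Ob) (k : Hom K A),
      comp f k = zerom K B /\
      (forall X (h : Hom X A), comp f h = zerom X B ->
         exists! u : Hom X K, comp k u = h);
  has_cokernels : forall A B (f : Hom A B), exists (Q : Ob) (c : Hom B Q),
      comp c f = zerom A Q /\
      (forall X (h : Hom B X), comp h f = zerom A X ->
         exists! u : Hom Q X, comp u c = h);
  mono_is_kernel : forall A B (m : Hom A B),
      (forall X (u v : Hom X A), comp m u = comp m v -> u = v) ->
      exists (C : Ob) (g : Hom B C), comp g m = zerom A C /\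
      (forall X (h : Hom X B), comp g h = zerom X C ->
         exists! u : Hom X A, comp m u = h);
  epi_is_cokernel : forall A B (e : Hom A B),
      (forall X (u v : Hom B X), comp u e = comp v e -> u = v) ->
      exists (K : Ob) (g : Hom K A), comp e g = zerom K B /\
      (forall X (h : Hom A X), comp h g = zerom K X ->
         exists! u : Hom B X, comp u e = h)
}.

Arguments Hom {a} _ _.
Arguments idm {a} _.
Arguments comp {a A B C} _ _.
Arguments zerom {a} _ _.
Arguments addm {a A B} _ _.
Arguments oppm {a A B} _.

Section Notions.
Context {Ac : AbCat}.
Local Notation Ob := (Ob Ac).

Definition is_mono {A B : Ob} (m : Hom A B) : Prop :=
  forall X (u v : Hom X A), comp m u = comp m v -> u = v.

Definition is_epi {A B : Ob} (e : Hom A B) : Prop :=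
  forall X (u v : Hom B X), comp u e = comp v e -> u = v.

Definition is_kernel {A B K : Ob} (f : Hom A B) (k : Hom K A) : Prop :=
  comp f k = zerom K B /\
  forall X (h : Hom X A), comp f h = zerom X B ->
    exists! u : Hom X K, comp k u = h.

Definition is_cokernel {A B Q : Ob} (f : Hom A B) (c : Hom B Q) : Prop :=
  comp c f = zerom A Q /\
  forall X (h : Hom B X), comp h f = zerom A X ->
    exists! u : Hom Q X, comp u c = h.

Definition is_pullback {A B C P : Ob} (f : Hom A C) (g : Hom B C)
    (p1 : Hom P A) (p2 : Hom P B) : Prop :=
  comp f p1 = comp g p2 /\
  forall X (h1 : Hom X A) (h2 : Hom X B), comp f h1 = comp g h2 ->
    exists! u : Hom X P, comp p1 u = h1 /\ comp p2 u = h2.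

Definition is_section {X Y : Ob} (s : Hom X Y) : Prop :=
  exists t : Hom Y X, comp t s = idm X.

Definition is_retraction {X Y : Ob} (s : Hom X Y) : Prop :=
  exists t : Hom Y X, comp s t = idm Y.

Definition fully_invariant {K M : Ob} (i : Hom K M) : Prop :=
  is_mono i /\ forall h : Hom M M, exists a : Hom K K, comp h i = comp i a.

Definition fully_coinvariant {M C : Ob} (d : Hom M C) : Prop :=
  is_epi d /\ forall h : Hom M M, exists b : Hom C C, comp d h = comp b d.

Definition short_exact {F N C : Ob} (i : Hom F N) (d : Hom N C) : Prop :=
  is_mono i /\ is_epi d /\ is_kernel d i /\ is_cokernel i d.

Definition fi_short_exact {F N C : Ob} (i : Hom F N) (d : Hom N C) : Prop :=
  short_exact i d /\ fully_invariant i.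

Definition MF_split (strong : bool) (M : Ob) {F N C : Ob}
    (i : Hom F N) (d : Hom N C) : Prop :=
  forall (g : Hom M N) (K : Ob) (k : Hom K M), is_kernel (comp d g) k ->
    is_section k /\ (strong = true -> fully_invariant k).

Definition dual_MF_split (strong : bool) (M : Ob) {F N C : Ob}
    (i : Hom F N) (d : Hom N C) : Prop :=
  forall (g : Hom N M) (Q : Ob) (c : Hom M Q), is_cokernel (comp g i) c ->
    is_retraction c /\ (strong = true -> fully_coinvariant c).

End Notions.


(* Given g : M1 -> N1 between summands, extend it to g' = sN g tM : M -> N.
   The kernel of d1 g is then a retract, in the arrow category, of the
   kernel of d g', and sections as well as fully invariant monomorphisms
   are stable under retracts.  Dually, for g : N/N1 -> M/M1 the cokernel of
   g m is a retract of the cokernel of g' i with g' = sig g cN, where sig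
   splits M -> M/M1.  The converses take the trivial summands M1 = M, N1 = N
   in (1) and M1 = N1 = 0 in (2). *)

Arguments compA {a A B C D} h g f.
Arguments comp1m {a A B} f.
Arguments compm1 {a A B} f.
Arguments addmA {a A B} f g h.
Arguments addmC {a A B} f g.
Arguments add0m {a A B} f.
Arguments addNm {a A B} f.
Arguments compDl {a A B C} g1 g2 f.
Arguments compDr {a A B C} g f1 f2.

Section Preadditive.
Context {Ac : AbCat}.

Lemma addm0 {A B : Ob Ac} (f : Hom A B) : addm f (zerom A B) = f.
Proof. rewrite addmC; apply add0m. Qed.

Lemma oppm_unique {A B : Ob Ac} (f g : Hom A B) :
  addm f g = zerom A B -> f = oppm g.
Proof.
  intro E.
  rewrite <- (add0m (oppm g)), <- E, <- addmA, (addmC g), addNm, addm0.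
  reflexivity.
Qed.

Lemma addm_idem_zero {A B : Ob Ac} (f : Hom A B) : addm f f = f -> f = zerom A B.
Proof.
  intro E. transitivity (addm (oppm f) (addm f f)).
  - rewrite addmA, addNm, add0m; reflexivity.
  - rewrite E; apply addNm.
Qed.

Lemma comp0m {A B C : Ob Ac} (f : Hom A B) : comp (zerom B C) f = zerom A C.
Proof. apply addm_idem_zero. rewrite <- compDl, add0m. reflexivity. Qed.

Lemma compm0 {A B C : Ob Ac} (f : Hom B C) : comp f (zerom A B) = zerom A C.
Proof. apply addm_idem_zero. rewrite <- compDr, add0m. reflexivity. Qed.

Lemma compNm {A B C : Ob Ac} (f : Hom B C) (g : Hom A B) :
  comp (oppm f) g = oppm (comp f g).
Proof. apply oppm_unique. rewrite <- compDl, addNm. apply comp0m. Qed.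

Lemma compmN {A B C : Ob Ac} (f : Hom B C) (g : Hom A B) :
  comp f (oppm g) = oppm (comp f g).
Proof. apply oppm_unique. rewrite <- compDr, addNm. apply compm0. Qed.

Lemma oppm0 {A B : Ob Ac} : oppm (zerom A B) = zerom A B.
Proof. symmetry. apply oppm_unique. apply add0m. Qed.

End Preadditive.

Section Limits.
Context {Ac : AbCat}.

Lemma kernel_lift {A B K X : Ob Ac} (f : Hom A B) (k : Hom K A) (h : Hom X A) :
  is_kernel f k -> comp f h = zerom X B -> exists u : Hom X K, comp k u = h.
Proof.
  intros [_ Hu] Hh. destruct (Hu X h Hh) as [u [Hk _]]. exists u; exact Hk.
Qed.

Lemma cokernel_desc {A B Q X : Ob Ac} (f : Hom A B) (c : Hom B Q) (h : Hom B X) :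
  is_cokernel f c -> comp h f = zerom A X -> exists u : Hom Q X, comp u c = h.
Proof.
  intros [_ Hu] Hh. destruct (Hu X h Hh) as [u [Hc _]]. exists u; exact Hc.
Qed.

Lemma kernel_mono {A B K : Ob Ac} (f : Hom A B) (k : Hom K A) :
  is_kernel f k -> is_mono k.
Proof.
  intros [Hz Hu] X u v E.
  destruct (Hu X (comp k u)) as [w [_ Hw]].
  - rewrite compA, Hz; apply comp0m.
  - rewrite <- (Hw u eq_refl). apply Hw. symmetry; exact E.
Qed.

Lemma cokernel_epi {A B Q : Ob Ac} (f : Hom A B) (c : Hom B Q) :
  is_cokernel f c -> is_epi c.
Proof.
  intros [Hz Hu] X u v E.
  destruct (Hu X (comp u c)) as [w [_ Hw]].
  - rewrite <- compA, Hz; apply compm0.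
  - rewrite <- (Hw u eq_refl). apply Hw. symmetry; exact E.
Qed.

Lemma pullback_mono {A B C P : Ob Ac} (f : Hom A C) (g : Hom B C)
    (p1 : Hom P A) (p2 : Hom P B) :
  is_pullback f g p1 p2 -> is_mono f -> is_mono p2.
Proof.
  intros [Hc Hu] Hf X u v E.
  assert (E1 : comp p1 u = comp p1 v).
  { apply Hf. rewrite !compA, Hc, <- !compA, E. reflexivity. }
  destruct (Hu X (comp p1 u) (comp p2 u)) as [w [_ Hw]].
  - rewrite !compA, Hc. reflexivity.
  - rewrite <- (Hw u (conj eq_refl eq_refl)). apply Hw. split; symmetry; assumption.
Qed.

Lemma mono_kernel_of_cokernel {A B Q : Ob Ac} (j : Hom A B) (c : Hom B Q) :
  is_mono j -> is_cokernel j c -> is_kernel c j.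
Proof.
  intros Hj Hc. split; [exact (proj1 Hc) |].
  destruct (mono_is_kernel Ac _ _ j Hj) as [C0 [g0 [Hg0 Hu]]].
  destruct (cokernel_desc _ _ g0 Hc Hg0) as [v Hv].
  intros X h Hh. apply Hu.
  rewrite <- Hv, <- compA, Hh. apply compm0.
Qed.

Lemma cokernel_section_retraction {A B Q : Ob Ac} (s : Hom A B) (c : Hom B Q) :
  is_section s -> is_cokernel s c -> is_retraction c.
Proof.
  intros [t Hts] Hc.
  (* the complementary idempotent 1 - s t kills s, so it factors through c *)
  destruct (cokernel_desc _ _ (addm (idm B) (oppm (comp s t))) Hc) as [r Hr].
  { rewrite compDl, comp1m, compNm, <- compA, Hts, compm1, addmC, addNm.
    reflexivity. }
  exists r. apply (cokernel_epi _ _ Hc).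
  rewrite <- compA, Hr, compDr, compm1, compmN, compA, (proj1 Hc),
    comp0m, oppm0, addm0, comp1m.
  reflexivity.
Qed.

Lemma idm_section (A : Ob Ac) : is_section (idm A).
Proof. exists (idm A); apply comp1m. Qed.

Lemma idm_epi (A : Ob Ac) : is_epi (idm A).
Proof. intros X u v E. rewrite !compm1 in E. exact E. Qed.

Lemma pullback_idm {A B : Ob Ac} (f : Hom A B) : is_pullback f (idm B) (idm A) f.
Proof.
  split; [rewrite compm1, comp1m; reflexivity |].
  intros X h1 h2 E. exists h1. split.
  - split; [apply comp1m | rewrite E; apply comp1m].
  - intros u [E1 _]. rewrite comp1m in E1. symmetry; exact E1.
Qed.

Lemma cokernel_zerom_idm (Z A : Ob Ac) : is_cokernel (zerom Z A) (idm A).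
Proof.
  split; [apply comp1m |].
  intros X h _. exists h. split; [apply compm1 |].
  intros u E. rewrite compm1 in E. symmetry; exact E.
Qed.

Lemma zero_object_section {Z : Ob Ac} (A : Ob Ac) :
  (forall B (f g : Hom Z B), f = g) -> is_section (zerom Z A).
Proof. intro HZ. exists (zerom A Z). apply HZ. Qed.

End Limits.

Section KernelRetract.
Context {Ac : AbCat}.
Context {A A' K K' : Ob Ac} {k : Hom K A} {k' : Hom K' A'}.
Context {s : Hom A A'} {t : Hom A' A} {phi : Hom K' K} {psi : Hom K K'}.
Hypotheses (Hts : comp t s = idm A) (Hk : is_mono k)
  (Hphi : comp k phi = comp t k') (Hpsi : comp k' psi = comp s k).

Lemma kernel_retract_idm : comp phi psi = idm K.
Proof.
  apply Hk. rewrite compA, Hphi, <- compA, Hpsi, compA, Hts, comp1m, compm1.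
  reflexivity.
Qed.

Lemma is_section_retract : is_section k' -> is_section k.
Proof.
  intros [r Hr]. exists (comp phi (comp r s)).
  rewrite <- !compA, <- Hpsi, (compA r k' psi), Hr, comp1m.
  exact kernel_retract_idm.
Qed.

Lemma fully_invariant_retract : fully_invariant k' -> fully_invariant k.
Proof.
  intros [_ Hinv]. split; [exact Hk |]. intro h.
  destruct (Hinv (comp s (comp h t))) as [b Hb].
  exists (comp phi (comp b psi)).
  rewrite compA, Hphi, <- compA, (compA k' b psi), <- Hb.
  rewrite <- !compA, Hpsi, !(compA t s), Hts, !comp1m. reflexivity.
Qed.

End KernelRetract.

Section CokernelRetract.
Context {Ac : AbCat}.
Context {A A' Q Q' : Ob Ac} {c : Hom A Q} {c' : Hom A' Q'}.
Context {s : Hom A A'} {t : Hom A' A} {phi : Hom Q Q'} {psi : Hom Q' Q}.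
Hypotheses (Hts : comp t s = idm A) (Hc : is_epi c)
  (Hphi : comp phi c = comp c' s) (Hpsi : comp psi c' = comp c t).

Lemma cokernel_retract_idm : comp psi phi = idm Q.
Proof.
  apply Hc. rewrite <- compA, Hphi, compA, Hpsi, <- compA, Hts, compm1, comp1m.
  reflexivity.
Qed.

Lemma is_retraction_retract : is_retraction c' -> is_retraction c.
Proof.
  intros [r Hr]. exists (comp t (comp r phi)).
  rewrite !compA, <- Hpsi, <- (compA psi c' r), Hr, compm1.
  exact cokernel_retract_idm.
Qed.

Lemma fully_coinvariant_retract : fully_coinvariant c' -> fully_coinvariant c.
Proof.
  intros [_ Hinv]. split; [exact Hc |]. intro h.
  destruct (Hinv (comp s (comp h t))) as [b Hb].
  exists (comp psi (comp b phi)).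
  rewrite <- !compA, Hphi, (compA b c' s), <- Hb, !compA, Hpsi.
  rewrite <- (compA c t s), Hts, compm1.
  rewrite <- (compA (comp c h) t s), Hts, compm1. reflexivity.
Qed.

End CokernelRetract.

Section SplitSummand.
Context {Ac : AbCat}.
Context {F N C M M1 N1 P C1 : Ob Ac} {i : Hom F N} {d : Hom N C}.
Context {sM : Hom M1 M} {tM : Hom M M1} {sN : Hom N1 N}.
Context {q : Hom P F} {j : Hom P N1} {d1 : Hom N1 C1} {g : Hom M1 N1}.
Hypotheses (Hdi : is_kernel d i) (HtM : comp tM sM = idm M1)
  (Hpb : is_pullback i sN q j) (Hd1 : is_cokernel j d1).

Lemma summand_kernel_retraction {K K' : Ob Ac} (k : Hom K M1) (k' : Hom K' M) :
  is_kernel (comp d1 g) k -> is_kernel (comp d (comp sN (comp g tM))) k' ->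
  exists phi : Hom K' K, comp k phi = comp tM k'.
Proof.
  intros Hk Hk'.
  destruct (kernel_lift _ _ (comp (comp sN (comp g tM)) k') Hdi) as [a Ha].
  { rewrite compA. exact (proj1 Hk'). }
  destruct (proj2 Hpb K' a (comp g (comp tM k'))) as [u [[_ Hu] _]].
  { rewrite Ha, !compA. reflexivity. }
  apply (kernel_lift _ _ _ Hk).
  rewrite <- compA, <- Hu, compA, (proj1 Hd1). apply comp0m.
Qed.

Lemma summand_kernel_embedding {K K' : Ob Ac} (k : Hom K M1) (k' : Hom K' M) :
  is_mono i ->
  is_kernel (comp d1 g) k -> is_kernel (comp d (comp sN (comp g tM))) k' ->
  exists psi : Hom K K', comp k' psi = comp sM k.
Proof.
  intros Hi Hk Hk'.
  assert (Hj : is_kernel d1 j)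
    by exact (mono_kernel_of_cokernel _ _ (pullback_mono _ _ _ _ Hpb Hi) Hd1).
  destruct (kernel_lift _ _ (comp g k) Hj) as [w Hw].
  { rewrite compA. exact (proj1 Hk). }
  apply (kernel_lift _ _ _ Hk').
  rewrite <- !compA, (compA tM sM k), HtM, comp1m, <- Hw,
    (compA sN j w), <- (proj1 Hpb), !compA, (proj1 Hdi), !comp0m.
  reflexivity.
Qed.

End SplitSummand.

Lemma MF_split_summand {Ac : AbCat} (strong : bool) {F N C M M1 N1 P C1 : Ob Ac}
    (i : Hom F N) (d : Hom N C) (sM : Hom M1 M) (sN : Hom N1 N)
    (q : Hom P F) (j : Hom P N1) (d1 : Hom N1 C1) :
  is_mono i -> is_kernel d i -> is_section sM ->
  is_pullback i sN q j -> is_cokernel j d1 ->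
  MF_split strong M i d -> MF_split strong M1 j d1.
Proof.
  intros Hi Hdi [tM HtM] Hpb Hd1 Hsplit g K k Hk.
  destruct (has_kernels Ac _ _ (comp d (comp sN (comp g tM)))) as [K' [k' Hk']].
  destruct (Hsplit _ _ _ Hk') as [Hsec Hstrong].
  destruct (summand_kernel_retraction Hdi Hpb Hd1 _ _ Hk Hk') as [phi Hphi].
  destruct (summand_kernel_embedding Hdi HtM Hpb Hd1 _ _ Hi Hk Hk') as [psi Hpsi].
  pose proof (kernel_mono _ _ Hk) as Hkm.
  split.
  - exact (is_section_retract HtM Hkm Hphi Hpsi Hsec).
  - intro Hs. exact (fully_invariant_retract HtM Hkm Hphi Hpsi (Hstrong Hs)).
Qed.

Section SplitQuotient.
Context {Ac : AbCat}.
Context {F N M QM QN I : Ob Ac} {i : Hom F N} {cM : Hom M QM} {sg : Hom QM M}.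
Context {cN : Hom N QN} {e : Hom F I} {m : Hom I QN} {g : Hom QN QM}.
Hypotheses (HcM : comp cM sg = idm QM) (He : is_epi e)
  (Hme : comp m e = comp cN i).

Lemma quotient_cokernel_embedding {Q Q' : Ob Ac} (c : Hom QM Q) (c' : Hom M Q') :
  is_cokernel (comp g m) c -> is_cokernel (comp (comp sg (comp g cN)) i) c' ->
  exists phi : Hom Q Q', comp phi c = comp c' sg.
Proof.
  intros Hc Hc'. apply (cokernel_desc _ _ _ Hc).
  apply He. rewrite comp0m, <- (proj1 Hc'), <- !compA, Hme. reflexivity.
Qed.

Lemma quotient_cokernel_retraction {Q Q' : Ob Ac} (c : Hom QM Q) (c' : Hom M Q') :
  is_cokernel (comp g m) c -> is_cokernel (comp (comp sg (comp g cN)) i) c' ->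
  exists psi : Hom Q' Q, comp psi c' = comp c cM.
Proof.
  intros Hc Hc'. apply (cokernel_desc _ _ _ Hc').
  rewrite <- !compA, (compA cM sg), HcM, comp1m, <- Hme, (compA g m e),
    (compA c (comp g m) e), (proj1 Hc).
  apply comp0m.
Qed.

End SplitQuotient.

Lemma dual_MF_split_quotient {Ac : AbCat} (strong : bool)
    {F N C M M1 N1 QM QN I C2 : Ob Ac} (i : Hom F N) (d : Hom N C)
    (sM : Hom M1 M) (cM : Hom M QM) (sN : Hom N1 N) (cN : Hom N QN)
    (e : Hom F I) (m : Hom I QN) (d2 : Hom QN C2) :
  is_section sM -> is_cokernel sM cM ->
  is_epi e -> comp m e = comp cN i ->
  dual_MF_split strong M i d -> dual_MF_split strong QM m d2.
Proof.
  intros HsM HcM He Hme Hsplit g Q c Hc.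
  destruct (cokernel_section_retraction _ _ HsM HcM) as [sg Hsg].
  destruct (has_cokernels Ac _ _ (comp (comp sg (comp g cN)) i)) as [Q' [c' Hc']].
  destruct (Hsplit _ _ _ Hc') as [Hret Hstrong].
  destruct (quotient_cokernel_embedding He Hme _ _ Hc Hc') as [phi Hphi].
  destruct (quotient_cokernel_retraction Hsg Hme _ _ Hc Hc') as [psi Hpsi].
  pose proof (cokernel_epi _ _ Hc) as Hce.
  split.
  - exact (is_retraction_retract Hsg Hce Hphi Hpsi Hret).
  - intro Hs. exact (fully_coinvariant_retract Hsg Hce Hphi Hpsi (Hstrong Hs)).
Qed.

Theorem corollary3p9 (Ac : AbCat) (M F N C : Ob Ac) (i : Hom F N) (d : Hom N C)
    (Hfi : fi_short_exact i d) :
  (forall strong : bool,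
     MF_split strong M i d <->
     (forall (M1 : Ob Ac) (sM : Hom M1 M), is_section sM ->
      forall (N1 : Ob Ac) (sN : Hom N1 N), is_section sN ->
      forall (P : Ob Ac) (q : Hom P F) (j : Hom P N1), is_pullback i sN q j ->
      forall (C1 : Ob Ac) (d1 : Hom N1 C1), is_cokernel j d1 ->
        MF_split strong M1 j d1)) /\
  (forall strong : bool,
     dual_MF_split strong M i d <->
     (forall (M1 : Ob Ac) (sM : Hom M1 M), is_section sM ->
      forall (N1 : Ob Ac) (sN : Hom N1 N), is_section sN ->
      forall (QM : Ob Ac) (cM : Hom M QM), is_cokernel sM cM ->
      forall (QN : Ob Ac) (cN : Hom N QN), is_cokernel sN cN ->
      forall (I : Ob Ac) (e : Hom F I) (m : Hom I QN),
        is_epi e -> is_mono m -> comp m e = comp cN i ->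
      forall (C2 : Ob Ac) (d2 : Hom QN C2), is_cokernel m d2 ->
        dual_MF_split strong QM m d2)).
Proof.
  destruct Hfi as [[Hi [_ [Hdi Hid]]] _].
  split; intro strong; split.
  - intros Hsplit M1 sM HsM N1 sN _ P q j Hpb C1 d1 Hd1.
    exact (MF_split_summand strong i d sM sN q j d1 Hi Hdi HsM Hpb Hd1 Hsplit).
  - intro H.
    exact (H M (idm M) (idm_section M) N (idm N) (idm_section N)
             F (idm F) i (pullback_idm i) C d Hid).
  - intros Hsplit M1 sM HsM N1 sN _ QM cM HcM QN cN _ I e m He _ Hme C2 d2 _.
    exact (dual_MF_split_quotient strong i d sM cM sN cN e m d2 HsM HcM He Hme Hsplit).
  - intro H.
    destruct (has_zero_object Ac) as [Z [_ HZ]].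
    exact (H Z (zerom Z M) (zero_object_section M HZ)
             Z (zerom Z N) (zero_object_section N HZ)
             M (idm M) (cokernel_zerom_idm Z M) N (idm N) (cokernel_zerom_idm Z N)
             F (idm F) i (idm_epi F) Hi
             (eq_trans (compm1 i) (eq_sym (comp1m i))) C d Hid).
Qed.
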